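(* Let $G=(V,E)$ be a connected graph with $n\ge2$ vertices, with adjacency eigenvalues $\lambda_1(G)\ge\lambda_2(G)\ge\cdots\ge\lambda_n(G)$. Let $\rho_V(G)=\max_{v\in V}\rho(G-v)$ and $\rho_E(G)=\max_{e\in E}\rho(G-e)$. Then: (a) $\lambda_2(G)<\rho_V(G)\le\rho_E(G)$; (b) if $G$ is non-bipartite, then $-\lambda_n(G)<\rho_E(G)$; (c) if $\Gamma(G)$ is nonempty, then $\rho_\Gamma(G)<\rho_E(G)$, where $\rho_\Gamma(G)=\max_{G_\pi\in\Gamma(G)}\rho(G_\pi)$.
   Context: All graphs are finite, simple and undirected. $G-v$ is obtained by deleting vertex $v$ and its incident edges; $G-e$ is obtained by deleting edge $e$ (keeping all vertices). $\rho(\cdot)$ denotes the spectral radius (largest modulus of an eigenvalue) of the adjacency matrix. A signed graph $G_\pi$ is a pair $(G,\pi)$ with $\pi:E\to\{+1,-1\}$, with adjacency matrix having entry $\pi(\{i,j\})$ for adjacent $i,j$ and $0$ otherwise; $\rho(G_\pi)$ is the largest modulus of its eigenvalues. $\Gamma(G)=\{G_\pi:\ \pi:E\to\{\pm1\},\ \rho(G_\pi)<\rho(G)\}$. *)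

(* scalars in algC (algebraic complex numbers, an
   algebraically closed numeric field), so every characteristic polynomial
   splits and eigenvalues (with multiplicity) are available. *)
From HB Require Import structures.
From mathcomp Require Import all_boot all_order all_algebra all_field.
Set Implicit Arguments. Unset Strict Implicit. Unset Printing Implicit Defensive.
Import Order.TTheory GRing.Theory Num.Theory.
Local Open Scope ring_scope.

Definition simple_graph n (adj : rel 'I_n) : Prop :=
  (forall i j, adj i j = adj j i) /\ (forall i, ~~ adj i i).

Definition connected_graph n (adj : rel 'I_n) : Prop :=
  forall i j, connect adj i j.

Definition bipartite n (adj : rel 'I_n) : Prop :=
  exists f : 'I_n -> bool, forall i j, adj i j -> f i != f j.

Definition adjmx n (adj : rel 'I_n) : 'M[algC]_n :=
  \matrix_(i, j) (adj i j)%:R.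

Definition del_vertex n (adj : rel 'I_n) (v : 'I_n) : rel 'I_n.-1 :=
  fun x y => adj (lift v x) (lift v y).

Definition del_edge n (adj : rel 'I_n) (a b : 'I_n) : rel 'I_n :=
  fun x y => adj x y && ~~ (((x == a) && (y == b)) || ((x == b) && (y == a))).

(* Signed graph: a signature is given by sg : 'I_n -> 'I_n -> bool
   (true means sign -1), symmetric so that it is a function on edges. *)
Definition signature_ok n (sg : {ffun 'I_n -> {ffun 'I_n -> bool}}) : bool :=
  [forall i, forall j, sg i j == sg j i].

Definition signed_adjmx n (adj : rel 'I_n)
    (sg : {ffun 'I_n -> {ffun 'I_n -> bool}}) : 'M[algC]_n :=
  \matrix_(i, j) (if adj i j then (if sg i j then -1 else 1) else 0).

Lemma char_poly_splits m (A : 'M[algC]_m) :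
  exists s : seq algC, char_poly A == \prod_(z <- s) ('X - z%:P).
Proof.
have [s Hs] := closed_field_poly_normal (char_poly A).
exists s; apply/eqP; rewrite {1}Hs.
by have /monicP -> := char_poly_monic A; rewrite scale1r.
Qed.

Definition eigs m (A : 'M[algC]_m) : seq algC := xchoose (char_poly_splits A).

Definition sorted_eigs m (A : 'M[algC]_m) : seq algC :=
  sort (fun x y => y <= x) (eigs A).

(* lambda_k(A), 1-indexed. *)
Definition lambda m (A : 'M[algC]_m) (k : nat) : algC := nth 0 (sorted_eigs A) k.-1.

Definition spec_rad m (A : 'M[algC]_m) : algC :=
  \big[Num.max/0]_(z <- eigs A) `|z|.

Definition rhoV n (adj : rel 'I_n) : algC :=
  \big[Num.max/0]_(v : 'I_n) spec_rad (adjmx (del_vertex adj v)).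

Definition rhoE n (adj : rel 'I_n) : algC :=
  \big[Num.max/0]_(p : 'I_n * 'I_n | adj p.1 p.2)
     spec_rad (adjmx (del_edge adj p.1 p.2)).

Definition in_Gamma n (adj : rel 'I_n) (sg : {ffun 'I_n -> {ffun 'I_n -> bool}}) : bool :=
  signature_ok sg && (spec_rad (signed_adjmx adj sg) < spec_rad (adjmx adj)).

Definition Gamma_nonempty n (adj : rel 'I_n) : Prop :=
  exists sg, in_Gamma adj sg.

Definition rhoGamma n (adj : rel 'I_n) : algC :=
  \big[Num.max/0]_(sg | in_Gamma adj sg) spec_rad (signed_adjmx adj sg).

(* The tool throughout is the Rayleigh bound [|y A y^*| <= rho(A) |y|^2] for Hermitian [A];
   when [A >= 0] its equality case makes [|y|] a Perron vector whenever [y] is an eigenvector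
   for an eigenvalue of modulus [rho(A)].

   (a) In a connected graph a nonnegative eigenvector vanishing somewhere vanishes everywhere,
   so [rho] is a simple eigenvalue and [lambda_2 < rho].  The combination of a Perron vector
   and a [lambda_2]-eigenvector that vanishes at a vertex [v] has Rayleigh quotient above
   [lambda_2] and lives on [G - v].  Moreover [G - v] is [G - vw] with [v] deleted, and
   deleting a vertex does not increase the Perron root.

   (b), (c) Let [x] be a real eigenvector, for [mu], of a signed adjacency matrix [S] of [G].
   If some edge has [x_a S_ab x_b < 0], or [x] vanishes at a vertex [u] (which then has two
   neighbours on which [x] does not vanish), then [|x|] tested on [G - e] for a suitable edge
   [e] gives [mu < rho(G - e)].  Otherwise [x_i S_ij x_j > 0] on every edge: for [S = -A(G)]
   and [mu = -lambda_n] this is a bipartition, and for [S = +-B], [mu = rho(B)] it makes [|x|]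
   a positive eigenvector of [A(G)] for [rho(B)], whence [rho(B) = rho(G)]. *)

From HB Require Import structures.
From mathcomp Require Import all_boot all_order all_algebra all_field.
From mathcomp Require Import ring.
Set Implicit Arguments. Unset Strict Implicit. Unset Printing Implicit Defensive.
Import Order.TTheory GRing.Theory Num.Theory Num.Def.
Local Open Scope ring_scope.
Local Open Scope sesquilinear_scope.

Local Notation "''[' u , v ]" := (dotmx u v) : ring_scope.
Local Notation "''[' u ]" := (dotmx u u) : ring_scope.

Section NonnegBigmax.
Variables (R : numDomainType) (I : eqType) (P : pred I) (F : I -> R).
Hypothesis F_ge0 : forall i, P i -> 0 <= F i.

Lemma bigmax_ge0 r : 0 <= \big[Num.max/0]_(i <- r | P i) F i.
Proof. by elim/big_rec: _ => // i x Pi x_ge0; rewrite maxEle; case: ifP => // _; apply: F_ge0. Qed.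

Lemma le_bigmax_ge0 r i : i \in r -> P i -> F i <= \big[Num.max/0]_(j <- r | P j) F j.
Proof.
elim: r => // a r IHr; rewrite in_cons big_cons => /orP[/eqP-> | ir] Pi.
  by rewrite Pi maxEle; case: ifP.
case: ifP => Pa; last exact: IHr.
apply: le_trans (IHr ir Pi) _; rewrite maxEle; case: ifP => // /negbT Fa_gt.
have := real_leVge (ger0_real (F_ge0 Pa)) (ger0_real (bigmax_ge0 r)).
by rewrite (negbTE Fa_gt).
Qed.

Lemma bigmax_le_ge0 r c : 0 <= c -> (forall i, i \in r -> P i -> F i <= c) ->
  \big[Num.max/0]_(i <- r | P i) F i <= c.
Proof.
move=> c_ge0 leFc; rewrite big_seq_cond.
apply: (big_ind (fun x => x <= c)) => // [x y | i /andP[]]; last exact: leFc.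
by rewrite maxEle; case: ifP.
Qed.

Lemma bigmax_ge0_attained r : (exists2 i, i \in r & P i) ->
  exists2 i, P i & \big[Num.max/0]_(j <- r | P j) F j = F i.
Proof.
move=> [j jr Pj].
have [E|//] : \big[Num.max/0]_(i <- r | P i) F i = 0 \/
    exists2 i, P i & \big[Num.max/0]_(i <- r | P i) F i = F i.
  apply: (big_ind (fun x => x = 0 \/ exists2 i, P i & x = F i)) => [| x y | i Pi];
    [by left | by rewrite maxEle; case: ifP | by right; exists i].
exists j => //; rewrite E; apply/le_anti; rewrite (F_ge0 Pj) /= -E.
exact: le_bigmax_ge0.
Qed.

Lemma eq_bigmax_ge0_mem r1 r2 : r1 =i r2 ->
  \big[Num.max/0]_(i <- r1 | P i) F i = \big[Num.max/0]_(i <- r2 | P i) F i.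
Proof.
move=> r12; apply/le_anti/andP; split; apply: bigmax_le_ge0 (bigmax_ge0 _) _ => i ir Pi;
  by apply: le_bigmax_ge0; rewrite ?r12 // -r12.
Qed.

End NonnegBigmax.

Definition qform m (M : 'M[algC]_m) (y : 'rV[algC]_m) : algC := '[y *m M, y].

Lemma qformE m (M : 'M[algC]_m) y :
  qform M y = \sum_i \sum_j y 0 i * M i j * (y 0 j)^*.
Proof.
rewrite /qform dotmxE mxE [RHS]exchange_big; apply: eq_bigr => j _ /=.
by rewrite !mxE big_distrl.
Qed.

Lemma dnormE m (y : 'rV[algC]_m) : '[y] = \sum_i `|y 0 i| ^+ 2.
Proof. by rewrite dotmxE mxE; apply: eq_bigr => i _; rewrite !mxE normCK. Qed.

Lemma qform_eigen m (M : 'M[algC]_m) y z : y *m M = z *: y -> qform M y = z * '[y].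
Proof. by rewrite /qform => ->; rewrite linearZl. Qed.

Lemma dotmx_mulmx_adjoint m (M : 'M[algC]_m) u v : '[u *m M, v] = '[u, v *m M ^t*].
Proof. by rewrite !dotmxE trmx_mul map_mxM trmxCK mulmxA. Qed.

Lemma dotmx_mulmx_unitary m (P : 'M[algC]_m) u v :
  P \is unitarymx -> '[u *m P, v *m P] = '[u, v].
Proof. by move=> Pu; rewrite dotmx_mulmx_adjoint mulmxtVK. Qed.

Lemma dotmx_orthonormal2 m (u w : 'rV[algC]_m) a b c d :
  '[u] = 1 -> '[w] = 1 -> '[u, w] = 0 ->
  '[a *: u + b *: w, c *: u + d *: w] = a * c^* + b * d^*.
Proof.
move=> uu ww uw; have wu : '[w, u] = 0 by apply/eqP; rewrite herm_eq0C; apply/eqP.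
rewrite linearDl !linearZl /= !linearDr !linearZr /= uu ww uw wu.
by rewrite !mulr0 !mulr1 addr0 add0r.
Qed.

Lemma hermsymmxP m (M : 'M[algC]_m) : reflect (M ^t* = M) (M \is hermsymmx).
Proof. by rewrite is_hermitianmxE expr0 scale1r; apply: (iffP eqP) => [<-|->]. Qed.

Lemma char_poly_similar (R : comUnitRingType) m (A Q : 'M[R]_m) : Q \in unitmx ->
  char_poly (invmx Q *m A *m Q) = char_poly A.
Proof.
move=> Qu; rewrite /char_poly /char_poly_mx.
set iQ := map_mx polyC (invmx Q); set pQ := map_mx polyC Q.
have iQpQ : iQ *m pQ = 1%:M by rewrite -map_mxM mulVmx // map_mx1.
have -> : 'X%:M - map_mx polyC (invmx Q *m A *m Q) = iQ *m ('X%:M - map_mx polyC A) *m pQ.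
  by rewrite mulmxBr mulmxBl scalar_mxC -[_ *m iQ *m pQ]mulmxA iQpQ mulmx1 -!map_mxM.
by rewrite !det_mulmx mulrAC -det_mulmx iQpQ det1 mul1r.
Qed.

Section HermitianSpectrum.
Variables (m : nat) (M : 'M[algC]_m).
Hypothesis Mherm : M \is hermsymmx.
Local Notation P := (spectralmx M).
Local Notation d := (spectral_diag M).

Let P_unitary : P \is unitarymx := spectral_unitarymx M.
Let mulmxKtVP (y : 'rV[algC]_m) : y *m P ^t* *m P = y := mulmxKtV y P_unitary erefl.

Lemma spectral_decomposition : M = P ^t* *m diag_mx d *m P.
Proof.
by rewrite -invmx_unitary ?spectral_unitarymx //; apply/orthomx_spectralP/hermitian_normalmx.
Qed.

Lemma spectral_diag_real k : d 0 k \is Num.real.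
Proof. exact: mxOverP (hermitian_spectral_diag_real Mherm) 0 k. Qed.

Lemma row_spectralmx_eigen k : row k P *m M = d 0 k *: row k P.
Proof.
rewrite {2}spectral_decomposition !mulmxA -row_mul (unitarymxP P_unitary).
by rewrite row1 -rowE row_diag_mx -scalemxAl -rowE.
Qed.

Lemma dotmx_row_spectralmx k l : '[row k P, row l P] = (k == l)%:R.
Proof. exact: row_unitarymxP P_unitary k l. Qed.

Lemma perm_eigs_spectral_diag : perm_eq (eigs M) [seq d 0 k | k <- enum 'I_m].
Proof.
apply: prod_XsubC_eq; rewrite -(eqP (xchooseP (char_poly_splits M))) big_map.
rewrite {1}spectral_decomposition -invmx_unitary //.
rewrite char_poly_similar ?spectral_unit // char_poly_trig ?diag_mx_is_trig //.
by rewrite big_enum; apply: eq_bigr => i _; rewrite mxE eqxx.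
Qed.

Lemma size_eigs : size (eigs M) = m.
Proof. by rewrite (perm_size perm_eigs_spectral_diag) size_map size_enum_ord. Qed.

Lemma mem_eigs z : z \in eigs M -> exists k, z = d 0 k.
Proof. by rewrite (perm_mem perm_eigs_spectral_diag) => /mapP[k _ ->]; exists k. Qed.

Lemma eigs_real z : z \in eigs M -> z \is Num.real.
Proof. by case/mem_eigs => k ->; apply: spectral_diag_real. Qed.

Lemma spec_radE : spec_rad M = \big[Num.max/0]_(k < m) `|d 0 k|.
Proof.
by rewrite /spec_rad (eq_bigmax_ge0_mem _ (perm_mem perm_eigs_spectral_diag)) ?big_map ?big_enum.
Qed.

Lemma spec_rad_ge0 : 0 <= spec_rad M.
Proof. by rewrite spec_radE; apply: bigmax_ge0 => k _; apply: normr_ge0. Qed.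

Lemma norm_spectral_diag_le k : `|d 0 k| <= spec_rad M.
Proof.
by rewrite spec_radE (le_bigmax_ge0 (fun k _ => normr_ge0 (d 0 k))) ?mem_index_enum.
Qed.

Lemma spectral_diag_le_spec_rad k : d 0 k <= spec_rad M.
Proof. exact: le_trans (real_ler_norm (spectral_diag_real k)) (norm_spectral_diag_le k). Qed.

Lemma eigs_le_spec_rad z : z \in eigs M -> z <= spec_rad M.
Proof. by case/mem_eigs => k ->; apply: spectral_diag_le_spec_rad. Qed.

Lemma spec_rad_attained : (0 < m)%N -> exists k, spec_rad M = `|d 0 k|.
Proof.
move=> m_gt0; rewrite spec_radE.
have [k _ ->] := bigmax_ge0_attained (P := xpredT) (fun k _ => normr_ge0 (d 0 k))
  (ex_intro2 _ _ (Ordinal m_gt0) (mem_index_enum _) isT).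
by exists k.
Qed.

Lemma qform_spectral y : qform M y = \sum_k d 0 k * `|(y *m P ^t*) 0 k| ^+ 2.
Proof.
rewrite /qform {1}spectral_decomposition !mulmxA -[X in '[_, X]]mulmxKtVP.
rewrite dotmx_mulmx_unitary // dotmxE mxE; apply: eq_bigr => k _.
by rewrite mul_mx_diag !mxE normCK mulrCA mulrA.
Qed.

Lemma dnorm_spectral y : '[y] = \sum_k `|(y *m P ^t*) 0 k| ^+ 2.
Proof.
by rewrite -dnormE -[RHS](dotmx_mulmx_unitary _ _ P_unitary) mulmxKtVP.
Qed.

Lemma norm_qform_le y : `|qform M y| <= spec_rad M * '[y].
Proof.
rewrite qform_spectral dnorm_spectral mulr_sumr; apply: le_trans (ler_norm_sum _ _ _) _.
apply: ler_sum => k _; rewrite normrM (ger0_norm (exprn_ge0 _ (normr_ge0 _))).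
by rewrite ler_wpM2r ?exprn_ge0 ?norm_spectral_diag_le.
Qed.

Lemma qform_eq_spec_rad_eigen y :
  qform M y = spec_rad M * '[y] -> y *m M = spec_rad M *: y.
Proof.
set w := y *m P ^t*; move=> qy.
have gap_ge0 k : 0 <= (spec_rad M - d 0 k) * `|w 0 k| ^+ 2.
  by rewrite mulr_ge0 ?exprn_ge0 // subr_ge0 spectral_diag_le_spec_rad.
have gap_sum : \sum_k (spec_rad M - d 0 k) * `|w 0 k| ^+ 2 = 0.
  under eq_bigr do rewrite mulrBl.
  by rewrite sumrB -mulr_sumr -dnorm_spectral -qform_spectral qy subrr.
have wD : w *m diag_mx d = spec_rad M *: w.
  apply/rowP => k; rewrite mul_mx_diag mxE [RHS]mxE.
  have /eqP := psumr_eq0P (fun k _ => gap_ge0 k) gap_sum (i := k) isT.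
  rewrite mulf_eq0 sqrf_eq0 normr_eq0 subr_eq0 => /orP[/eqP<-|/eqP->].
    by rewrite mulrC.
  by rewrite mul0r mulr0.
by rewrite {1}spectral_decomposition !mulmxA -/w wD -scalemxAl /w mulmxKtVP.
Qed.

End HermitianSpectrum.

Lemma rV_neq0_entry (R : nmodType) m (x : 'rV[R]_m) : x != 0 -> exists i, x 0 i != 0.
Proof.
move=> x_neq0; apply/existsP; apply: contraNT x_neq0 => /existsPn x0.
by apply/eqP/rowP => i; rewrite mxE; apply/eqP/negPn.
Qed.

Lemma hermsym_eigenvalue_conj m (M : 'M[algC]_m) u v a b : M \is hermsymmx ->
  u *m M = a *: u -> v *m M = b *: v -> '[u, v] != 0 -> a = b^*.
Proof.
move=> /hermsymmxP MtM uM vM uv_neq0; apply: (mulIf uv_neq0).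
have := dotmx_mulmx_adjoint M u v; rewrite MtM uM vM.
by rewrite linearZl linearZr.
Qed.

Lemma dnorm_map_norm m (y : 'rV[algC]_m) : '[map_mx normr y] = '[y].
Proof. by rewrite !dnormE; apply: eq_bigr => i _; rewrite mxE normr_id. Qed.

Lemma map_norm_eq0 m (y : 'rV[algC]_m) : (map_mx normr y == 0) = (y == 0).
Proof.
apply/eqP/eqP => [/rowP y0 | ->]; apply/rowP => i; last by rewrite !mxE normr0.
by have := y0 i; rewrite !mxE => /normr0_eq0.
Qed.

Lemma norm_qform_le_map_norm m (M N : 'M[algC]_m) y : (forall i j, `|M i j| <= N i j) ->
  `|qform M y| <= qform N (map_mx normr y).
Proof.
move=> MN; rewrite !qformE; apply: le_trans (ler_norm_sum _ _ _) _; apply: ler_sum => i _.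
apply: le_trans (ler_norm_sum _ _ _) _; apply: ler_sum => j _.
rewrite !mxE (conj_Creal (normr_real _)) !normrM norm_conjC.
by rewrite ler_wpM2r ?ler_wpM2l ?normr_ge0.
Qed.

Lemma qform_ge0 m (N : 'M[algC]_m) (y : 'rV[algC]_m) :
  (forall i j, 0 <= N i j) -> (forall i, 0 <= y 0 i) -> 0 <= qform N y.
Proof.
move=> N_ge0 y_ge0; rewrite qformE; apply: sumr_ge0 => i _; apply: sumr_ge0 => j _.
by rewrite conj_Creal ?ger0_real // !mulr_ge0.
Qed.

Lemma row_spectralmx_neq0 m (M : 'M[algC]_m) k : row k (spectralmx M) != 0.
Proof.
apply/eqP => row0; have := row_unitarymxP (spectral_unitarymx M) k k.
by rewrite row0 eqxx dotmxE mul0mx mxE => /esym/eqP; rewrite oner_eq0.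
Qed.

Section NonnegHermitian.
Variables (m : nat) (M : 'M[algC]_m).
Hypotheses (Mherm : M \is hermsymmx) (M_ge0 : forall i j, 0 <= M i j).
Implicit Types (x y p : 'rV[algC]_m) (z mu : algC).

Lemma qform_le_spec_rad y : (forall i, 0 <= y 0 i) -> qform M y <= spec_rad M * '[y].
Proof.
move=> y_ge0; apply: le_trans (norm_qform_le Mherm y).
exact/real_ler_norm/ger0_real/qform_ge0.
Qed.

(* The triangle inequality gives [|qform M y| <= qform M |y|], so [|y|] attains the
   Rayleigh bound as well. *)
Lemma map_norm_eigen y z : y *m M = z *: y -> `|z| = spec_rad M ->
  map_mx normr y *m M = spec_rad M *: map_mx normr y.
Proof.
move=> yM z_rho; apply: qform_eq_spec_rad_eigen => //; apply/le_anti.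
rewrite qform_le_spec_rad => [|i]; last by rewrite mxE normr_ge0.
rewrite dnorm_map_norm -z_rho -(ger0_norm (dnorm_ge0 _ y)) -normrM -(qform_eigen yM).
by apply: norm_qform_le_map_norm => i j; rewrite ger0_norm.
Qed.

Lemma perron_eigenvector : (0 < m)%N ->
  exists x, [/\ x != 0, forall i, 0 <= x 0 i & x *m M = spec_rad M *: x].
Proof.
move=> m_gt0; have [k dk] := spec_rad_attained Mherm m_gt0.
exists (map_mx normr (row k (spectralmx M))); split.
- by rewrite map_norm_eq0 row_spectralmx_neq0.
- by move=> i; rewrite mxE normr_ge0.
- exact: map_norm_eigen (row_spectralmx_eigen Mherm k) (esym dk).
Qed.

Lemma positive_eigenvalue p mu : (0 < m)%N -> (forall i, 0 < p 0 i) ->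
  p *m M = mu *: p -> mu = spec_rad M.
Proof.
move=> m_gt0 p_gt0 pM; have [x [x_neq0 x_ge0 xM]] := perron_eigenvector m_gt0.
have [i xi_neq0] := rV_neq0_entry x_neq0.
have xp_gt0 : 0 < '[x, p].
  rewrite dotmxE mxE; under eq_bigr => j _ do rewrite !mxE (conj_Creal (ger0_real (ltW (p_gt0 j)))).
  rewrite (bigD1 i) //=; apply: ltr_wpDr.
    by apply: sumr_ge0 => j _; exact: mulr_ge0 (x_ge0 j) (ltW (p_gt0 j)).
  by rewrite mulr_gt0 // lt_def xi_neq0 x_ge0.
rewrite -[mu]conjCK -(hermsym_eigenvalue_conj Mherm xM pM (lt0r_neq0 xp_gt0)).
by rewrite conj_Creal // ger0_real // spec_rad_ge0.
Qed.

Lemma spec_rad_in_eigs : (0 < m)%N -> spec_rad M \in eigs M.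
Proof.
move=> m_gt0; have [x [x_neq0 _ xM]] := perron_eigenvector m_gt0.
have : eigenvalue M (spec_rad M) by apply/eigenvalueP; exists x.
rewrite eigenvalue_root_char (eqP (xchooseP (char_poly_splits M))).
by rewrite root_prod_XsubC.
Qed.

End NonnegHermitian.

Definition del_mx (R : Type) m (M : 'M[R]_m) (v : 'I_m) : 'M[R]_m.-1 :=
  \matrix_(i, j) M (lift v i) (lift v j).

Lemma del_mx_hermsym m (M : 'M[algC]_m) v : M \is hermsymmx -> del_mx M v \is hermsymmx.
Proof.
move=> /hermsymmxP/matrixP MtM; apply/hermsymmxP/matrixP => i j.
by rewrite !mxE -[RHS]MtM !mxE.
Qed.

Section DeleteVertex.
Variables (m : nat) (v : 'I_m) (y : 'rV[algC]_m).
Hypothesis yv0 : y 0 v = 0.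
Local Notation y' := (\row_i y 0 (lift v i)).

Lemma dnorm_del_vertex : '[y'] = '[y].
Proof.
rewrite !dnormE [RHS](bigD1_ord v) //= yv0 normr0 expr0n add0r.
by apply: eq_bigr => i _; rewrite mxE.
Qed.

Lemma qform_del_mx M : qform (del_mx M v) y' = qform M y.
Proof.
rewrite !qformE [RHS](bigD1_ord v) //= [in RHS]big1 => [|j _]; last by rewrite yv0 !mul0r.
rewrite add0r; apply: eq_bigr => i _; rewrite [RHS](bigD1_ord v) //= yv0 conjC0 mulr0 add0r.
by apply: eq_bigr => j _; rewrite !mxE.
Qed.

End DeleteVertex.

Lemma spec_rad_del_mx_le m (M : 'M[algC]_m) v : M \is hermsymmx -> (forall i j, 0 <= M i j) ->
  (1 < m)%N -> spec_rad (del_mx M v) <= spec_rad M.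
Proof.
move=> Mherm M_ge0 m_gt1; have m'_gt0 : (0 < m.-1)%N by rewrite -ltnS prednK // ltnW.
have del_ge0 i j : 0 <= del_mx M v i j by rewrite mxE.
have [x [x_neq0 x_ge0 xM]] := perron_eigenvector (del_mx_hermsym v Mherm) del_ge0 m'_gt0.
pose y : 'rV[algC]_m := \row_i oapp (x 0) 0 (unlift v i).
have yv0 : y 0 v = 0 by rewrite mxE unlift_none.
have y'E : \row_i y 0 (lift v i) = x by apply/rowP => i; rewrite !mxE liftK.
have x_gt0 : 0 < '[x] by rewrite dnorm_gt0.
rewrite -(ler_pM2r x_gt0) -(qform_eigen xM) -{1}y'E qform_del_mx // -y'E (dnorm_del_vertex yv0).
by apply: qform_le_spec_rad => // i; rewrite mxE; case: unlift.
Qed.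

(* [y] below is the combination of [u] and [w] vanishing at [v]; its Rayleigh quotient
   exceeds [b]. *)
Lemma lt_spec_rad_del_mx m (M : 'M[algC]_m) u w a b : M \is hermsymmx ->
  '[u] = 1 -> '[w] = 1 -> '[u, w] = 0 -> u *m M = a *: u -> w *m M = b *: w ->
  a \is Num.real -> b \is Num.real -> b < a -> exists v, b < spec_rad (del_mx M v).
Proof.
move=> Mherm uu ww uw uM wM a_real b_real ba.
have [v wv_neq0] : exists v, w 0 v != 0.
  by apply: rV_neq0_entry; apply: contra_eq_neq ww => ->; rewrite linear0l eq_sym oner_neq0.
pose y := w 0 v *: u + (- u 0 v) *: w.
have yv0 : y 0 v = 0 by rewrite !mxE mulNr mulrC subrr.
have yM : y *m M = (w 0 v * a) *: u + (- u 0 v * b) *: w.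
  by rewrite mulmxDl -!scalemxAl uM wM !scalerA.
have dy : '[y] = `|w 0 v| ^+ 2 + `|u 0 v| ^+ 2.
  by rewrite dotmx_orthonormal2 // !normCK rmorphN; ring.
have qy : qform M y = a * `|w 0 v| ^+ 2 + b * `|u 0 v| ^+ 2.
  by rewrite /qform yM dotmx_orthonormal2 // !normCK rmorphN; ring.
have wv_gt0 : 0 < `|w 0 v| ^+ 2 by rewrite exprn_gt0 ?normr_gt0.
have y_gt0 : 0 < '[y] by rewrite dy ltr_wpDr ?exprn_ge0.
have qy_gt : b * '[y] < qform M y by rewrite dy qy mulrDr ltrD2r ltr_pM2r.
exists v; rewrite -(ltr_pM2r y_gt0); apply: lt_le_trans qy_gt _.
rewrite -(qform_del_mx yv0) -(dnorm_del_vertex yv0).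
apply: le_trans (norm_qform_le (del_mx_hermsym v Mherm) _); apply: real_ler_norm.
by rewrite (qform_del_mx yv0) qy rpredD ?rpredM ?rpredX ?normr_real.
Qed.

Lemma real_eigenvector m (M : 'M[algC]_m) (x : 'rV[algC]_m) z : M \is a realmx -> z \is Num.real ->
  x != 0 -> x *m M = z *: x -> exists y : 'rV_m, [/\ y \is a realmx, y != 0 & y *m M = z *: y].
Proof.
move=> Mreal z_real x_neq0 xM.
set xr := map_mx (@Re _) x; set xi := map_mx (@Im _) x.
have xr_real : xr \is a realmx by apply/mxOverP => i j; rewrite mxE Creal_Re.
have xi_real : xi \is a realmx by apply/mxOverP => i j; rewrite mxE Creal_Im.
have zR w : w \is a realmx -> z *: w \is a realmx.
  by move=> /mxOverP w_real; apply/mxOverP => i j; rewrite mxE rpredM.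
have xE : x = xr + 'i *: xi by apply/matrixP => i j; rewrite !mxE -Crect.
move: xM; rewrite {1 2}xE mulmxDl -scalemxAl scalerDr scalerA mulrC -scalerA => xM.
have := congr1 (map_mx (@Re _)) xM; rewrite !Remx_rect ?mxOverM ?zR // => xrM.
have := congr1 (map_mx (@Im _)) xM; rewrite !Immx_rect ?mxOverM ?zR // => xiM.
have [xr0|xr_neq0] := eqVneq xr 0; last by exists xr.
exists xi; split => //; apply: contraNneq x_neq0 => xi0.
by rewrite xE xr0 xi0 scaler0 addr0.
Qed.

Lemma count_le1_uniq (T : eqType) (P : pred T) (s : seq T) :
  uniq s -> {in P &, forall x y, x = y} -> (count P s <= 1)%N.
Proof.
move=> s_uniq P_inj; rewrite -size_filter.
have := filter_all P s; have := filter_uniq P s_uniq.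
case: (filter P s) => [|x [|y t]] //= /andP[xyt _] /and3P[Px Py _].
by rewrite inE (P_inj x y Px Py) eqxx in xyt.
Qed.

Section Graph.
Variables (n : nat) (adj : rel 'I_n).
Hypothesis adj_simple : simple_graph adj.

Let adj_sym : forall i j, adj i j = adj j i := proj1 adj_simple.

Lemma adj_neq a b : adj a b -> a != b.
Proof. by apply: contraTneq => ->; apply: (proj2 adj_simple). Qed.

Lemma adjmx_ge0 i j : 0 <= adjmx adj i j.
Proof. by rewrite mxE ler0n. Qed.

Lemma adjmx_hermsym : adjmx adj \is hermsymmx.
Proof.
apply/hermsymmxP/matrixP => i j.
by rewrite !mxE adj_sym conj_Creal ?ger0_real ?ler0n.
Qed.

Lemma simple_graph_del_edge a b : simple_graph (del_edge adj a b).
Proof.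
split => [i j|i]; rewrite /del_edge.
  by rewrite adj_sym orbC (andbC (j == a)) (andbC (j == b)).
by rewrite (negbTE (proj2 adj_simple i)).
Qed.

Lemma simple_graph_del_vertex v : simple_graph (del_vertex adj v).
Proof. by split=> [i j|i]; [apply: adj_sym | apply: (proj2 adj_simple)]. Qed.

Lemma adjmx_del_vertex_del_edge v w :
  adjmx (del_vertex adj v) = del_mx (adjmx (del_edge adj v w)) v.
Proof.
apply/matrixP => i j; rewrite !mxE /del_vertex /del_edge.
by rewrite !(eq_sym (lift v _) v) !(negbTE (neq_lift v _)) /= andbF andbT.
Qed.

Hypothesis adj_connected : connected_graph adj.

Lemma connected_crossing_edge (p : pred 'I_n) i j : p i -> ~~ p j ->
  exists a b, [/\ adj a b, p a & ~~ p b].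
Proof.
move=> pi pj; have /connectP[s] := adj_connected i j.
elim: s i pi => [|x s IHs] i pi /=; first by move=> _ ji; rewrite ji pi in pj.
case/andP=> ix xs; case px: (p x); first exact: IHs px xs.
by move=> _; exists i, x; rewrite px.
Qed.

Lemma connected_nonneg_eigen_eq0 (z : 'rV[algC]_n) c v : (forall i, 0 <= z 0 i) ->
  z *m adjmx adj = c *: z -> z 0 v = 0 -> z = 0.
Proof.
move=> z_ge0 zA zv0; apply/eqP; apply: contraT => z_neq0; have [j zj] := rV_neq0_entry z_neq0.
have [a [b [ab /eqP za zb]]] :=
  connected_crossing_edge (p := fun i => z 0 i == 0) (introT eqP zv0) zj.
have : z 0 b <= (z *m adjmx adj) 0 a.
  rewrite mxE (bigD1 b) //= mxE -adj_sym ab mulr1 lerDl.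
  by apply: sumr_ge0 => i _; rewrite mulr_ge0 ?adjmx_ge0.
by rewrite zA mxE za mulr0 => zb_le0; rewrite eq_le zb_le0 z_ge0 in zb.
Qed.

Lemma connected_perron_eigen_eq0 (y : 'rV[algC]_n) v :
  y *m adjmx adj = spec_rad (adjmx adj) *: y -> y 0 v = 0 -> y = 0.
Proof.
move=> yA yv0; apply/eqP; rewrite -map_norm_eq0; apply/eqP.
apply: (connected_nonneg_eigen_eq0 (v := v)) => [i||]; first by rewrite mxE normr_ge0.
  apply: map_norm_eigen yA _; rewrite ?adjmx_hermsym ?ger0_norm ?spec_rad_ge0 ?adjmx_hermsym //.
  exact: adjmx_ge0.
by rewrite mxE yv0 normr0.
Qed.

(* Two orthonormal Perron vectors would combine into one vanishing at a vertex. *)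
Lemma connected_spec_rad_simple :
  (count_mem (spec_rad (adjmx adj)) (eigs (adjmx adj)) <= 1)%N.
Proof.
set A := adjmx adj; set P := spectralmx A; set d := spectral_diag A.
have Aherm : A \is hermsymmx := adjmx_hermsym.
rewrite (permP (perm_eigs_spectral_diag Aherm)) count_map.
apply: count_le1_uniq (enum_uniq _) _ => k1 k2 /eqP dk1 /eqP dk2; apply/eqP/contraT => k12.
have [v p1v] := rV_neq0_entry (row_spectralmx_neq0 A k1).
pose y := row k2 P 0 v *: row k1 P - row k1 P 0 v *: row k2 P.
have yA : y *m A = spec_rad A *: y.
  rewrite mulmxBl -!scalemxAl !row_spectralmx_eigen // -/d dk1 dk2.
  by rewrite !scalerA scalerBr !scalerA (mulrC (spec_rad A)) (mulrC (spec_rad A)).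
have yv0 : y 0 v = 0 by rewrite !mxE mulrC subrr.
have /(congr1 (fun u => '[u, row k2 P])) := connected_perron_eigen_eq0 yA yv0.
rewrite linear0l linearBl !linearZl /= !dotmx_row_spectralmx // eqxx (negbTE k12).
by rewrite mulr0 mulr1 sub0r => /eqP; rewrite oppr_eq0 (negbTE p1v).
Qed.

End Graph.

Definition signing n (adj : rel 'I_n) (S : 'M[algC]_n) : Prop :=
  forall i j, [/\ S i j = S j i, S i j \is Num.real & `|S i j| = adjmx adj i j].

Lemma signing_hermsym n (adj : rel 'I_n) S : signing adj S -> S \is hermsymmx.
Proof.
move=> Ssg; apply/hermsymmxP/matrixP => i j.
by have [Sji Sreal _] := Ssg j i; rewrite !mxE conj_Creal.
Qed.

Lemma signing_realmx n (adj : rel 'I_n) S : signing adj S -> S \is a realmx.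
Proof. by move=> Ssg; apply/mxOverP => i j; have [] := Ssg i j. Qed.

Lemma signingZ n (adj : rel 'I_n) S e : e \is Num.real -> `|e| = 1 ->
  signing adj S -> signing adj (e *: S).
Proof.
move=> e_real e_norm Ssg i j; have [Sij Sreal Snorm] := Ssg i j; split.
- by rewrite !mxE Sij.
- by rewrite mxE rpredM.
- by rewrite [(e *: S) i j]mxE normrM e_norm mul1r.
Qed.

Lemma signing_opp_adjmx n (adj : rel 'I_n) : simple_graph adj -> signing adj (- adjmx adj).
Proof.
move=> [adj_sym _] i j; rewrite !mxE adj_sym normrN normr_nat.
by rewrite rpredN ger0_real ?ler0n.
Qed.

Lemma signing_signed_adjmx n (adj : rel 'I_n) sg : simple_graph adj -> signature_ok sg ->
  signing adj (signed_adjmx adj sg).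
Proof.
move=> [adj_sym _] /forallP sg_sym i j; rewrite !mxE adj_sym (eqP (forallP (sg_sym i) j)).
by case: (adj j i); case: (sg j i); rewrite ?rpredN ?real1 ?real0 ?normrN ?normr1 ?normr0.
Qed.

Lemma le_sum_pair m (F : 'I_m -> 'I_m -> algC) a b : (forall i j, 0 <= F i j) -> a != b ->
  F a b + F b a <= \sum_i \sum_j F i j.
Proof.
move=> F_ge0 ab; have le_sum i k : F i k <= \sum_j F i j.
  by rewrite (bigD1 k) //= lerDl sumr_ge0.
rewrite (bigD1 a) //= lerD // (bigD1 b) 1?eq_sym //= -[F b a]addr0 lerD //.
by apply: sumr_ge0 => i _; apply: sumr_ge0.
Qed.

Section EdgeDeletion.
Variables (n : nat) (adj : rel 'I_n) (S : 'M[algC]_n) (x : 'rV[algC]_n) (mu : algC).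
Hypotheses (adj_simple : simple_graph adj) (S_signing : signing adj S).
Hypotheses (x_real : x \is a realmx) (mu_real : mu \is Num.real) (xS : x *m S = mu *: x).

Let adj_sym : forall i j, adj i j = adj j i := proj1 adj_simple.
Let xi_real i : x 0 i \is Num.real. Proof. exact: mxOverP x_real 0 i. Qed.

(* Off the deleted edge, [x_i S_ij x_j <= |x_i| A_ij |x_j|] termwise; each of the two deleted
   terms contributes [- x_a S_ab x_b >= 0]. *)
Lemma qform_del_edge_ge a b : adj a b -> x 0 a * S a b * x 0 b <= 0 ->
  mu * '[x] - (x 0 a * S a b * x 0 b) *+ 2 <= qform (adjmx (del_edge adj a b)) (map_mx normr x).
Proof.
move=> ab t_le0; set t := x 0 a * S a b * x 0 b; set A' := adjmx (del_edge adj a b).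
have a_neq_b := adj_neq adj_simple ab.
pose D i j := `|x 0 i| * A' i j * `|x 0 j| - x 0 i * S i j * x 0 j.
have qS : mu * '[x] = \sum_i \sum_j x 0 i * S i j * x 0 j.
  by rewrite -(qform_eigen xS) qformE; do 2!apply: eq_bigr => ? _; rewrite conj_Creal.
have qA' : qform A' (map_mx normr x) = mu * '[x] + \sum_i \sum_j D i j.
  rewrite qS -big_split qformE; apply: eq_bigr => i _; rewrite -big_split.
  by apply: eq_bigr => j _; rewrite /D !mxE conj_Creal ?normr_real //= addrC subrK.
have D_edge : D a b = - t /\ D b a = - t.
  have [Sab _ _] := S_signing a b.
  rewrite /D !mxE /del_edge !eqxx (eq_sym b a) (negbTE a_neq_b) /= !andbF !mulr0 !mul0r !sub0r.
  by rewrite -Sab /t; split; ring.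
have D_ge0 i j : 0 <= D i j.
  have [eij|neij] := boolP (((i == a) && (j == b)) || ((i == b) && (j == a))).
    by case/orP: eij => /andP[/eqP-> /eqP->]; rewrite (proj1 D_edge, proj2 D_edge) oppr_ge0.
  have [_ Sreal /esym Snorm] := S_signing i j; rewrite mxE in Snorm.
  rewrite subr_ge0 /A' !mxE /del_edge (negbTE neij) andbT Snorm -!normrM.
  by rewrite real_ler_norm // !rpredM.
have [Dab Dba] := D_edge; rewrite qA' lerD2l -mulNrn mulr2n -{1}Dab -Dba.
exact: le_sum_pair.
Qed.

Let qform_del_edge_le a b : qform (adjmx (del_edge adj a b)) (map_mx normr x) <=
  spec_rad (adjmx (del_edge adj a b)) * '[x].
Proof.
rewrite -dnorm_map_norm; apply: qform_le_spec_rad => [||i]; last by rewrite mxE normr_ge0.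
  exact/adjmx_hermsym/simple_graph_del_edge.
exact: adjmx_ge0.
Qed.

Lemma lt_spec_rad_del_edge_neg a b : adj a b -> x 0 a * S a b * x 0 b < 0 ->
  mu < spec_rad (adjmx (del_edge adj a b)).
Proof.
move=> ab t_lt0; have x_gt0 : 0 < '[x].
  rewrite dnorm_gt0; apply: contraTneq t_lt0 => ->.
  by rewrite mxE !mul0r ltxx.
rewrite -(ltr_pM2r x_gt0); apply: lt_le_trans (qform_del_edge_le a b).
apply: lt_le_trans (qform_del_edge_ge ab (ltW t_lt0)).
by rewrite ltrDl oppr_gt0 pmulrn_llt0.
Qed.

(* If [|x|] realised [spec_rad] of [G - uw], it would be an eigenvector vanishing at [u]
   although the edge [uv] survives and [x] does not vanish at [v]. *)
Lemma lt_spec_rad_del_edge_zero u v w : x 0 u = 0 -> adj u v -> adj u w -> v != w ->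
  x 0 v != 0 -> mu < spec_rad (adjmx (del_edge adj u w)).
Proof.
move=> xu0 uv uw vw xv_neq0; set A' := adjmx (del_edge adj u w).
have A'herm : A' \is hermsymmx by exact/adjmx_hermsym/simple_graph_del_edge.
have mu_le : mu * '[x] <= qform A' (map_mx normr x).
  by have := qform_del_edge_ge uw; rewrite xu0 !mul0r mul0rn subr0; apply.
have x_gt0 : 0 < '[x] by rewrite dnorm_gt0; apply: contraNneq xv_neq0 => ->; rewrite mxE.
have rho_real := ger0_real (spec_rad_ge0 A'herm).
rewrite real_ltNge //; apply/negP => rho_le.
have qA' : qform A' (map_mx normr x) = spec_rad A' * '[map_mx normr x].
  rewrite dnorm_map_norm; apply/le_anti; rewrite qform_del_edge_le /=.
  by apply: le_trans mu_le; rewrite ler_pM2r.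
have := qform_eq_spec_rad_eigen A'herm qA'.
have u_neq_w := adj_neq adj_simple uw.
move/(congr1 (fun y : 'rV_n => y 0 u)); rewrite !mxE xu0 normr0 mulr0 => /eqP.
rewrite gt_eqF // (bigD1 v) //= ltr_wpDr ?sumr_ge0 // => [j _|]; first by rewrite !mxE mulr_ge0.
by rewrite !mxE /del_edge adj_sym uv (negbTE u_neq_w) (negbTE vw) !andbF mulr1 normr_gt0.
Qed.

(* Row [u] of the eigen-equation reads [\sum_i x_i S_iu = 0] and has a nonzero term [i = v]. *)
Lemma eigen_zero_second_neighbour u v : x 0 u = 0 -> adj u v -> x 0 v != 0 ->
  exists2 w, adj u w & v != w.
Proof.
move=> xu0 uv xv_neq0; have [w /andP[uw vw] | no_w] := pickP [pred w | adj u w & v != w].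
  by exists w.
have S0 i : i != v -> S i u = 0.
  move=> iv; have [_ _ Snorm] := S_signing i u; apply/normr0_eq0; rewrite Snorm mxE adj_sym.
  by have := no_w i; rewrite /= eq_sym iv andbT => ->.
have := congr1 (fun y : 'rV_n => y 0 u) xS; rewrite !mxE xu0 mulr0 (bigD1 v) //= big1 => [|i iv].
  rewrite addr0 => /eqP; rewrite mulf_eq0 (negbTE xv_neq0) -normr_eq0 /=.
  by have [_ _ ->] := S_signing v u; rewrite mxE adj_sym uv oner_eq0.
by rewrite S0 ?mulr0.
Qed.

Lemma positive_products_map_norm_eigen :
  (forall i, x 0 i != 0) -> (forall i j, adj i j -> 0 < x 0 i * S i j * x 0 j) ->
  map_mx normr x *m adjmx adj = mu *: map_mx normr x.
Proof.
move=> x_neq0_at pos; apply/rowP => j; apply: (mulIf (x := `|x 0 j|)); first by rewrite normr_eq0.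
have term i : `|x 0 i| * adjmx adj i j * `|x 0 j| = x 0 i * S i j * x 0 j.
  have [_ _ Snorm] := S_signing i j; have [ij|nij] := boolP (adj i j).
    by rewrite -Snorm -!normrM gtr0_norm ?pos.
  have S0 : S i j = 0 by apply/normr0_eq0; rewrite Snorm mxE (negbTE nij).
  by rewrite mxE (negbTE nij) S0 !mulr0 !mul0r.
have xSj : \sum_i x 0 i * S i j = mu * x 0 j.
  by have := congr1 (fun y : 'rV_n => y 0 j) xS; rewrite !mxE.
rewrite [(_ *m _) 0 j]mxE mulr_suml.
under eq_bigr => i _ do rewrite [map_mx _ _ 0 i]mxE term.
by rewrite -mulr_suml xSj !mxE -!mulrA -!expr2 real_normK.
Qed.

Hypothesis adj_connected : connected_graph adj.

Lemma signed_eigen_dichotomy : x != 0 ->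
  (exists a b, adj a b /\ mu < spec_rad (adjmx (del_edge adj a b))) \/
  ((forall i, x 0 i != 0) /\ forall i j, adj i j -> 0 < x 0 i * S i j * x 0 j).
Proof.
move=> x_neq0; have [/existsP[a /existsP[b /andP[ab t_lt0]]] | no_neg] :=
  boolP [exists a, exists b, adj a b && (x 0 a * S a b * x 0 b < 0)].
  by left; exists a, b; split=> //; apply: lt_spec_rad_del_edge_neg.
have [/existsP[u0 /eqP xu00] | no_zero] := boolP [exists u, x 0 u == 0].
  left; have [j xj] := rV_neq0_entry x_neq0.
  have [u [v [uv /eqP xu0 xv]]] :=
    connected_crossing_edge adj_connected (p := fun i => x 0 i == 0) (introT eqP xu00) xj.
  have [w uw vw] := eigen_zero_second_neighbour xu0 uv xv.
  by exists u, w; split=> //; apply: lt_spec_rad_del_edge_zero uv uw vw xv.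
right; have x_neq0_at i : x 0 i != 0.
  by apply: contraNneq no_zero => xi0; apply/existsP; exists i; rewrite xi0.
split=> // i j ij; have [_ Sreal Snorm] := S_signing i j.
have Sij_neq0 : S i j != 0 by rewrite -normr_eq0 Snorm mxE ij oner_eq0.
rewrite lt_def !mulf_neq0 ?x_neq0_at //= real_leNgt ?rpredM ?real0 //.
by apply: contra no_neg => t_lt0; apply/existsP; exists i; apply/existsP; exists j; rewrite ij.
Qed.

End EdgeDeletion.

Lemma adjmx_del_vertex n (adj : rel 'I_n) v : adjmx (del_vertex adj v) = del_mx (adjmx adj) v.
Proof. by apply/matrixP => i j; rewrite !mxE. Qed.

Lemma real_mul_lt0_sign (R : numDomainType) (a b : R) : a \is Num.real ->
  a * b < 0 -> (0 < a) != (0 < b).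
Proof.
move=> a_real ab_lt0; have [a_gt0|a_ngt0] := boolP (0 < a).
  by rewrite (pmulr_rlt0 _ a_gt0) in ab_lt0; rewrite lt_gtF.
have a_lt0 : a < 0.
  rewrite lt_neqAle real_leNgt ?real0 // a_ngt0 andbT.
  by apply: contraTneq ab_lt0 => ->; rewrite mul0r ltxx.
by rewrite (nmulr_rlt0 _ a_lt0) in ab_lt0; rewrite ab_lt0.
Qed.

Section MainTheorem.
Variables (n : nat) (adj : rel 'I_n).
Hypotheses (adj_simple : simple_graph adj) (adj_connected : connected_graph adj).
Hypothesis n_gt1 : (1 < n)%N.
Local Notation A := (adjmx adj).

Let Aherm : A \is hermsymmx := adjmx_hermsym adj_simple.
Let n_gt0 : (0 < n)%N := ltnW n_gt1.

Lemma le_rhoE a b : adj a b -> spec_rad (adjmx (del_edge adj a b)) <= rhoE adj.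
Proof.
move=> ab; apply: (le_bigmax_ge0 _ (mem_index_enum (a, b))) => //= p _.
exact/spec_rad_ge0/adjmx_hermsym/simple_graph_del_edge.
Qed.

Lemma le_rhoV v : spec_rad (adjmx (del_vertex adj v)) <= rhoV adj.
Proof.
apply: (le_bigmax_ge0 _ (mem_index_enum v)) => //= w _.
exact/spec_rad_ge0/adjmx_hermsym/simple_graph_del_vertex.
Qed.

Lemma lambda2_lt_spec_rad : lambda A 2 < spec_rad A.
Proof.
set rho := spec_rad A.
have rho_in : rho \in sorted_eigs A by rewrite mem_sort spec_rad_in_eigs //; apply: adjmx_ge0.
have le_rho z : z \in sorted_eigs A -> z <= rho by rewrite mem_sort; apply: eigs_le_spec_rad.
have s_sorted : sorted (fun x y => y <= x) (sorted_eigs A).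
  apply: (sort_sorted_in (P := fun z : algC => z \is Num.real)) => [x y xr yr|].
    by rewrite real_leVge.
  by apply/allP => z; apply: eigs_real.
have rho_simple : (count_mem rho (sorted_eigs A) <= 1)%N.
  by rewrite /sorted_eigs (permP (permEl (perm_sort _ _))) connected_spec_rad_simple.
have s_size : (1 < size (sorted_eigs A))%N by rewrite size_sort size_eigs.
rewrite /lambda /=; move: rho_in le_rho s_sorted rho_simple s_size.
case: (sorted_eigs A) => [|s0 [|s1 s]] //= rho_in le_rho /andP[s10 s_path] rho_simple _.
have s0_max : all (fun z => z <= s0) (s1 :: s).
  by apply: (order_path_min (fun x y z yx zy => le_trans zy yx)); rewrite /= s10.
have s0_rho : s0 = rho.
  apply/le_anti; rewrite le_rho ?mem_head //=.
  by move: rho_in; rewrite in_cons => /predU1P[-> //|/(allP s0_max)].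
rewrite lt_def -s0_rho s10 andbT; apply: contraTneq rho_simple => s0_s1.
by rewrite /= -s0_s1 s0_rho eqxx.
Qed.

Lemma lambda2_lt_rhoV : lambda A 2 < rhoV adj.
Proof.
have l2_in : lambda A 2 \in eigs A.
  by rewrite -(mem_sort (fun x y => y <= x)) mem_nth // size_sort size_eigs.
have [k2 dk2] := mem_eigs Aherm l2_in.
have [k1 dk1] := mem_eigs Aherm (spec_rad_in_eigs Aherm (@adjmx_ge0 _ adj) n_gt0).
have l2_lt := lambda2_lt_spec_rad.
have k12 : k1 != k2 by apply: contraTneq l2_lt => k12; rewrite dk2 dk1 k12 ltxx.
set P := spectralmx A.
have dot k l : '[row k P, row l P] = (k == l)%:R by apply: dotmx_row_spectralmx.
have [v l2_lt_v] : exists v, lambda A 2 < spec_rad (del_mx A v).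
  apply: (lt_spec_rad_del_mx Aherm (u := row k1 P) (w := row k2 P) (a := spec_rad A)).
  - by rewrite dot eqxx.
  - by rewrite dot eqxx.
  - by rewrite dot (negbTE k12).
  - by rewrite row_spectralmx_eigen // dk1.
  - by rewrite row_spectralmx_eigen // dk2.
  - by rewrite ger0_real ?spec_rad_ge0.
  - by rewrite dk2 spectral_diag_real.
  - exact: l2_lt.
apply: lt_le_trans l2_lt_v _; rewrite -adjmx_del_vertex; exact: le_rhoV.
Qed.

Lemma exists_neighbour v : exists w, adj v w.
Proof.
have [j jv] : exists j : 'I_n, j != v.
  have [->|v0] := eqVneq v (Ordinal n_gt0); last by exists (Ordinal n_gt0); rewrite eq_sym.
  by exists (Ordinal n_gt1).
have [a [b [ab /eqP av _]]] := connected_crossing_edge adj_connected (p := pred1 v) (eqxx v) jv.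
by exists b; rewrite -av.
Qed.

Lemma rhoV_le_rhoE : rhoV adj <= rhoE adj.
Proof.
have rhoE_ge0 : 0 <= rhoE adj.
  by apply: bigmax_ge0 => p _; exact/spec_rad_ge0/adjmx_hermsym/simple_graph_del_edge.
apply: bigmax_le_ge0 => // v _ _; have [w vw] := exists_neighbour v.
apply: le_trans (le_rhoE vw); rewrite (adjmx_del_vertex_del_edge _ v w).
by apply: spec_rad_del_mx_le; [exact/adjmx_hermsym/simple_graph_del_edge | exact: adjmx_ge0 |].
Qed.

Lemma opp_least_eigenvalue_lt_rhoE : ~ bipartite adj -> - lambda A n < rhoE adj.
Proof.
move=> not_bip; set l := lambda A n.
have l_in : l \in eigs A.
  by rewrite -(mem_sort (fun x y => y <= x)) mem_nth // size_sort (size_eigs Aherm) ltn_predL.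
have l_real := eigs_real Aherm l_in; have [k lk] := mem_eigs Aherm l_in.
have S_signing := signing_opp_adjmx adj_simple.
have ml_real : - l \is Num.real by rewrite rpredN.
have rowS : row k (spectralmx A) *m - A = - l *: row k (spectralmx A).
  by rewrite mulmxN row_spectralmx_eigen // -lk scaleNr.
have [x [x_real x_neq0 xS]] := real_eigenvector (signing_realmx S_signing) ml_real
  (row_spectralmx_neq0 A k) rowS.
have [[a [b [ab l_lt]]] | [_ pos]] := signed_eigen_dichotomy adj_simple
  S_signing x_real ml_real xS adj_connected x_neq0.
  exact: lt_le_trans l_lt (le_rhoE ab).
case: not_bip; exists (fun i => 0 < x 0 i) => i j ij.
apply: real_mul_lt0_sign; first exact: mxOverP x_real 0 i.
by move: (pos i j ij); rewrite !mxE ij mulrN1 mulNr oppr_gt0.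
Qed.

Lemma spec_rad_Gamma_lt_rhoE sg : in_Gamma adj sg -> spec_rad (signed_adjmx adj sg) < rhoE adj.
Proof.
case/andP => sg_ok rhoB_lt; set B := signed_adjmx adj sg.
have B_signing := signing_signed_adjmx adj_simple sg_ok.
have Bherm := signing_hermsym B_signing.
have [k rhoB] := spec_rad_attained Bherm n_gt0; set dk := spectral_diag B 0 k in rhoB.
have dk_real : dk \is Num.real := spectral_diag_real Bherm k.
(* The signing [e *: B] of [G] has the eigenvalue [|dk| = spec_rad B]. *)
pose e : algC := (-1) ^+ (dk < 0)%R.
have e_real : e \is Num.real by rewrite rpredX // rpredN real1.
have S_signing := signingZ e_real (normr_sign _ _) B_signing.
have rowS : row k (spectralmx B) *m (e *: B) = `|dk| *: row k (spectralmx B).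
  by rewrite -scalemxAr row_spectralmx_eigen // scalerA -real_normrEsign.
have [x [x_real x_neq0 xS]] := real_eigenvector (signing_realmx S_signing) (normr_real dk)
  (row_spectralmx_neq0 B k) rowS.
have [[a [b [ab dk_lt]]] | [x_nz pos]] := signed_eigen_dichotomy adj_simple S_signing x_real
  (normr_real _) xS adj_connected x_neq0.
  by rewrite rhoB; apply: lt_le_trans dk_lt (le_rhoE ab).
have x_gt0 i : 0 < map_mx normr x 0 i by rewrite mxE normr_gt0.
have := positive_eigenvalue Aherm (@adjmx_ge0 _ adj) n_gt0 x_gt0
  (positive_products_map_norm_eigen S_signing x_real xS x_nz pos).
by rewrite -rhoB => rhoBA; rewrite rhoBA ltxx in rhoB_lt.
Qed.

Lemma rhoGamma_lt_rhoE : Gamma_nonempty adj -> rhoGamma adj < rhoE adj.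
Proof.
move=> [sg0 sg0_in]; have rhoB_ge0 sg : in_Gamma adj sg -> 0 <= spec_rad (signed_adjmx adj sg).
  by case/andP=> sg_ok _; exact/spec_rad_ge0/signing_hermsym/signing_signed_adjmx.
rewrite /rhoGamma; have [sg sg_in ->] :=
  bigmax_ge0_attained rhoB_ge0 (ex_intro2 _ _ sg0 (mem_index_enum _) sg0_in).
exact: spec_rad_Gamma_lt_rhoE.
Qed.

End MainTheorem.

Theorem mainTheorem3 (n : nat) (adj : rel 'I_n) :
  simple_graph adj -> connected_graph adj -> (2 <= n)%N ->
  [/\ lambda (adjmx adj) 2 < rhoV adj /\ rhoV adj <= rhoE adj,
      ~ bipartite adj -> - lambda (adjmx adj) n < rhoE adj
    & Gamma_nonempty adj -> rhoGamma adj < rhoE adj].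
Proof.
move=> adj_simple adj_connected n_gt1; split.
- by split; [exact: lambda2_lt_rhoV | exact: rhoV_le_rhoE].
- exact: opp_least_eigenvalue_lt_rhoE.
- exact: rhoGamma_lt_rhoE.
Qed.
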